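(* Let $a_1,\dots,a_n\in\mathbb{F}$ be pairwise non-$(\sigma,\delta)$-conjugate and $r_1,\dots,r_n\in\mathbb{Z}_+$. If $F\in\mathbb{F}[x;\sigma,\delta]$ is non-zero and $(x-a_i)^{r_i}$ divides $F$ on the right for $i=1,\dots,n$, then $$\sum_{i=1}^n r_i\le\deg(F).$$ Furthermore, equality holds if and only if $F=cF_\Omega$ with $c\in\mathbb{F}^*$, where $F_\Omega$ is the monic least left common multiple of $(x-a_1)^{r_1},\dots,(x-a_n)^{r_n}$.
   Context: Let $\mathbb{F}$ be a division ring, $\sigma$ a ring endomorphism of $\mathbb{F}$ and $\delta$ a $\sigma$-derivation; $\mathbb{F}[x;\sigma,\delta]$ is the skew polynomial ring with $xa=\sigma(a)x+\delta(a)$ (a domain with additive degree and right Euclidean division). Elements $a,b\in\mathbb{F}$ are $(\sigma,\delta)$-conjugate if $b=\sigma(\beta)a\beta^{-1}+\delta(\beta)\beta^{-1}$ for some $\beta\in\mathbb{F}^*$. *)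

From HB Require Import structures.
From mathcomp Require Import all_boot all_order all_algebra.
Set Implicit Arguments. Unset Strict Implicit. Unset Printing Implicit Defensive.
Import GRing.Theory.
Local Open Scope ring_scope.

Section Skew.
Variable R : unitRingType.

Definition is_division_ring : Prop := forall x : R, x != 0 -> x \is a GRing.unit.

(* delta is a sigma-derivation, with the convention  x a = sigma(a) x + delta(a),
   i.e. delta(a + b) = delta a + delta b and delta(a b) = sigma(a) delta(b) + delta(a) b. *)
Definition is_sigma_derivation (s : R -> R) (d : R -> R) : Prop :=
  (forall a b, d (a + b) = d a + d b) /\
  (forall a b, d (a * b) = s a * d b + d a * b).

(* Elements of F[x;sigma,delta] are represented by their coefficient lists
   ({poly R}, p = \sum_i p_i x^i with coefficients on the left).
   xmul q computes x * q in the skew ring: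
   x * (\sum c_k x^k) = \sum (sigma(c_k) x^(k+1) + delta(c_k) x^k). *)
Definition xmul (s d : R -> R) (q : {poly R}) : {poly R} :=
  map_poly s q * 'X + map_poly d q.

Definition smul (s d : R -> R) (p q : {poly R}) : {poly R} :=
  \sum_(i < size p) (p`_i)%:P * iter i (xmul s d) q.

Definition spow (s d : R -> R) (p : {poly R}) (n : nat) : {poly R} :=
  iter n (fun P => smul s d P p) 1.

Definition rdvd (s d : R -> R) (G F : {poly R}) : Prop :=
  exists Q : {poly R}, F = smul s d Q G.

Definition sdeg (p : {poly R}) : nat := (size p).-1.

Definition sd_conj (s d : R -> R) (a b : R) : Prop :=
  exists2 beta : R, beta != 0 & b = s beta * a * beta^-1 + d beta * beta^-1.

Definition is_monic_llcm (s d : R -> R) (n : nat) (gs : 'I_n -> {poly R})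
  (L : {poly R}) : Prop :=
  L \is monic /\ (forall i, rdvd s d (gs i) L) /\
  (forall M, (forall i, rdvd s d (gs i) M) -> rdvd s d L M).

End Skew.

From HB Require Import structures.
From mathcomp Require Import all_boot all_order all_algebra zify.
From Stdlib Require Import Classical.
(* The degree bound rests on a commutation rule for linear factors: for b <> e
   and beta = b - e, (x - e^beta)(x - b) = (x - b^beta)(x - e), where
   c^beta = sigma(beta) c beta^-1 + delta(beta) beta^-1 is conjugate to c.  Hence
   a product of k linear factors with roots conjugate to a that right-divides
   G (x - b), b not conjugate to a, can be traded for another such product that
   right-divides G.  Peeling linear factors off F one at a time then shows that
   such products of lengths r_i, for pairwise non-conjugate a_i, all
   right-dividing F <> 0, satisfy sum r_i <= deg F.

   Conversely an Ore-type argument yields a nonzero common left multiple of the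
   (x - a_i)^(r_i) of degree <= sum r_i, and a minimal-degree argument turns it
   into a monic llcm L.  Thus deg L = sum r_i, and deg F = sum r_i exactly when
   F is a nonzero constant multiple of L. *)

Set Implicit Arguments. Unset Strict Implicit. Unset Printing Implicit Defensive.
Import GRing.Theory.
Local Open Scope ring_scope.

Section SkewPolynomials.
Variable R : unitRingType.
Hypothesis HR : is_division_ring R.
Variable s : {rmorphism R -> R}.
Variable d : R -> R.
Hypothesis Hd : is_sigma_derivation s d.

Local Notation xm := (xmul s d).
Local Notation sm := (smul s d).
Local Notation rd := (rdvd s d).

Lemma sderD a b : d (a + b) = d a + d b. Proof. by case: Hd. Qed.
Lemma sderM a b : d (a * b) = s a * d b + d a * b. Proof. by case: Hd. Qed.

Lemma sder0 : d 0 = 0.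
Proof. by have := sderD 0 0; rewrite addr0 => /eqP; rewrite -subr_eq subrr => /eqP. Qed.

Lemma sder1 : d 1 = 0.
Proof.
have := sderM 1 1; rewrite mulr1 rmorph1 mul1r => /eqP.
by rewrite mulr1 -subr_eq subrr => /eqP.
Qed.

Lemma sder_nat (b : bool) : d b%:R = 0.
Proof. by case: b; rewrite ?sder1 ?sder0. Qed.

Lemma unit_nz (x : R) : x != 0 -> x \is a GRing.unit. Proof. exact: HR. Qed.

Lemma mulr_eq0_div (x y : R) : x * y = 0 -> x = 0 \/ y = 0.
Proof.
move=> h; case: (eqVneq x 0) => [->|nx]; first by left.
by right; rewrite -(mulKr (unit_nz nx) y) h mulr0.
Qed.

Lemma mulr_neq0_div (x y : R) : x != 0 -> y != 0 -> x * y != 0.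
Proof.
by move=> nx ny; apply/eqP => /mulr_eq0_div [] /eqP; rewrite ?(negPf nx) ?(negPf ny).
Qed.

Lemma sigma_neq0 (x : R) : x != 0 -> s x != 0.
Proof.
by move=> /unit_nz /(rmorph_unit s); apply: contraTneq => ->; rewrite unitr0.
Qed.

Lemma sigma_inj : injective s.
Proof.
move=> x y h; apply/eqP; rewrite -subr_eq0; apply: contraLR (eqxx (s x - s y)).
by move=> /sigma_neq0; rewrite rmorphB h subrr eqxx.
Qed.

Lemma coef_xmul (q : {poly R}) i :
  (xm q)`_i = (if i == 0%N then 0 else s q`_i.-1) + d q`_i.
Proof. by rewrite /xmul coefD coefMX !coef_map_id0 ?rmorph0 ?sder0. Qed.

Lemma xmulD (p q : {poly R}) : xm (p + q) = xm p + xm q.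
Proof.
apply/polyP => i; rewrite coefD !coef_xmul !coefD sderD.
by case: (i == 0%N); rewrite ?add0r ?rmorphD // addrACA.
Qed.

Lemma xmul0 : xm 0 = 0.
Proof. by apply/polyP => i; rewrite coef_xmul !coef0 rmorph0 sder0; case: ifP; rewrite addr0. Qed.

Lemma xmulN (p : {poly R}) : xm (- p) = - xm p.
Proof. by apply/eqP; rewrite -subr_eq0 opprK -xmulD addNr xmul0. Qed.

Lemma xmulB (p q : {poly R}) : xm (p - q) = xm p - xm q.
Proof. by rewrite xmulD xmulN. Qed.

Lemma xmulCl (c : R) (u : {poly R}) : xm (c%:P * u) = (s c)%:P * xm u + (d c)%:P * u.
Proof.
apply/polyP => i; rewrite coef_xmul coefD !coefCM coef_xmul mulrDr sderM.
by case: (i == 0%N); rewrite ?mulr0 ?add0r ?addr0 ?rmorphM ?addrA.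
Qed.

Lemma xmulXn k : xm 'X^k = 'X^(k.+1) :> {poly R}.
Proof.
apply/polyP => i; rewrite coef_xmul !coefXn sder_nat addr0.
by case: i => [|i] //=; rewrite eqSS rmorph_nat.
Qed.

Lemma iter_xmulD k (p q : {poly R}) : iter k xm (p + q) = iter k xm p + iter k xm q.
Proof. by elim: k => //= k ->; rewrite xmulD. Qed.

Lemma iter_xmulXn i k : iter i xm 'X^k = 'X^(i + k) :> {poly R}.
Proof. by elim: i => //= i ->; rewrite xmulXn. Qed.

Lemma smulE N (p q : {poly R}) : (size p <= N)%N ->
  sm p q = \sum_(i < N) (p`_i)%:P * iter i xm q.
Proof.
move=> hN; rewrite /smul (big_ord_widen _ (fun i => (p`_i)%:P * iter i xm q) hN).
rewrite big_mkcond /=; apply: eq_bigr => i _.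
by case: ifP => // /negbT; rewrite -leqNgt => /(nth_default 0) ->; rewrite mul0r.
Qed.

Lemma smulDl (p q r : {poly R}) : sm (p + q) r = sm p r + sm q r.
Proof.
rewrite !(@smulE (maxn (size p) (size q))) ?leq_maxl ?leq_maxr ?size_polyD //.
by rewrite -big_split; apply: eq_bigr => i _; rewrite coefD polyCD mulrDl.
Qed.

Lemma smul0l (r : {poly R}) : sm 0 r = 0.
Proof. by rewrite /smul size_poly0 big_ord0. Qed.

Lemma smulNl (p r : {poly R}) : sm (- p) r = - sm p r.
Proof. by apply/eqP; rewrite -subr_eq0 opprK -smulDl addNr smul0l. Qed.

Lemma smulBl (p q r : {poly R}) : sm (p - q) r = sm p r - sm q r.
Proof. by rewrite smulDl smulNl. Qed.

Lemma smul_suml I (l : seq I) (P : pred I) (F : I -> {poly R}) (r : {poly R}) :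
  sm (\sum_(i <- l | P i) F i) r = \sum_(i <- l | P i) sm (F i) r.
Proof. by elim/big_rec2: _ => [|i y p _ <-]; rewrite ?smul0l ?smulDl. Qed.

Lemma smulDr (p q r : {poly R}) : sm p (q + r) = sm p q + sm p r.
Proof. by rewrite /smul -big_split; apply: eq_bigr => i _; rewrite iter_xmulD mulrDr. Qed.

Lemma smulCl (c : R) (p r : {poly R}) : sm (c%:P * p) r = c%:P * sm p r.
Proof.
rewrite !(@smulE (size p)) //; last first.
  by apply/leq_sizeP => j hj; rewrite coefCM nth_default ?mulr0.
by rewrite mulr_sumr; apply: eq_bigr => i _; rewrite coefCM polyCM mulrA.
Qed.

Lemma smulXn k (r : {poly R}) : sm 'X^k r = iter k xm r.
Proof.
rewrite /smul size_polyXn big_ord_recr /= big1 ?add0r; last first.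
  by move=> i _; rewrite coefXn /= (ltn_eqF (ltn_ord i)) polyC0 mul0r.
by rewrite coefXn eqxx mul1r.
Qed.

Lemma poly_monomialsE (p : {poly R}) : p = \sum_(i < size p) (p`_i)%:P * 'X^i.
Proof.
by rewrite -[p in LHS]coefK poly_def; apply: eq_bigr => i _; rewrite mul_polyC.
Qed.

Lemma smulC (c : R) (r : {poly R}) : sm c%:P r = c%:P * r.
Proof. by have := smulCl c 1 r; rewrite mulr1 (smulXn 0). Qed.

Lemma smul1l (p : {poly R}) : sm 1 p = p.
Proof. by rewrite (smulC 1) mul1r. Qed.

Lemma smul1r (p : {poly R}) : sm p 1 = p.
Proof.
rewrite [RHS]poly_monomialsE /smul; apply: eq_bigr => i _.
by rewrite -(expr0 'X) iter_xmulXn addn0.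
Qed.

(* Associativity, reduced to the case of a left factor x. *)
Lemma xmul_smul (q r : {poly R}) : xm (sm q r) = sm (xm q) r.
Proof.
have -> : xm q = \sum_(i < size q) ((s q`_i)%:P * 'X^(i.+1) + (d q`_i)%:P * 'X^i).
  rewrite {1}[q]poly_monomialsE; elim/big_rec2: _ => [|i y p _ <-]; first by rewrite xmul0.
  by rewrite xmulD xmulCl xmulXn.
rewrite smul_suml [sm q r]/smul; elim/big_rec2: _ => [|i y p _ <-]; first by rewrite xmul0.
by rewrite xmulD xmulCl smulDl !smulCl !smulXn.
Qed.

Lemma smulA (p q r : {poly R}) : sm p (sm q r) = sm (sm p q) r.
Proof.
rewrite [sm p q]/smul smul_suml /smul; apply: eq_bigr => i _.
have itx : iter i xm (sm q r) = sm (iter i xm q) r.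
  by elim: (i : nat) => //= k ->; rewrite xmul_smul.
by rewrite itx -smulCl.
Qed.

Lemma size_Cmul (c : R) (u : {poly R}) : c != 0 -> size (c%:P * u) = size u.
Proof. by move=> /unit_nz /mulrI nc; rewrite mul_polyC (lreg_size _ nc). Qed.

Lemma lead_coef_Cmul (c : R) (u : {poly R}) :
  c != 0 -> lead_coef (c%:P * u) = c * lead_coef u.
Proof. by move=> /unit_nz /mulrI nc; rewrite mul_polyC (lead_coef_lreg _ nc). Qed.

Lemma size_xmul (q : {poly R}) : q != 0 ->
  size (xm q) = (size q).+1 /\ lead_coef (xm q) = s (lead_coef q).
Proof.
move=> nq; have hs : size (map_poly s q) = size q.
  by rewrite size_map_inj_poly ?rmorph0 //; exact: sigma_inj.
have nm : map_poly s q != 0 by rewrite -size_poly_eq0 hs size_poly_eq0.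
have hd : (size (map_poly d q) < size (map_poly s q * 'X)%R)%N.
  rewrite size_mulX // hs ltnS; apply/leq_sizeP => j hj.
  by rewrite coef_map_id0 ?sder0 // nth_default ?sder0.
have nl : s (lead_coef q) != 0 by apply: sigma_neq0; rewrite lead_coef_eq0.
rewrite /xmul size_polyDl // lead_coefDl // lead_coefMX lead_coef_map_id0 ?rmorph0 //.
by rewrite size_mulX // hs.
Qed.

Lemma size_iter_xmul k (q : {poly R}) : q != 0 ->
  size (iter k xm q) = (size q + k)%N /\ lead_coef (iter k xm q) = iter k s (lead_coef q).
Proof.
move=> nq; elim: k => [|k [IH1 IH2]] /=; first by rewrite addn0.
have nz : iter k xm q != 0 by rewrite -size_poly_eq0 IH1 addn_eq0 size_poly_eq0 (negPf nq).
by have [-> ->] := size_xmul nz; rewrite IH1 IH2 addnS.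
Qed.

Lemma size_smul (p q : {poly R}) : p != 0 -> q != 0 ->
  size (sm p q) = (size p + size q).-1 /\
  lead_coef (sm p q) = lead_coef p * iter (size p).-1 s (lead_coef q).
Proof.
move=> np nq; set m := (size p).-1.
have hp : size p = m.+1 by rewrite /m -polySpred.
have nl : p`_m != 0 by rewrite -lead_coef_eq0 in np.
have [hsT hlT] := size_iter_xmul m nq.
have hT : size ((p`_m)%:P * iter m xm q) = (size q + m)%N by rewrite size_Cmul.
have hS : (size (\sum_(i < m) (p`_(widen_ord (leqnSn m) i))%:P * iter i xm q)%R
           < size q + m)%N.
  apply: leq_ltn_trans (size_sum _ _ _) _.
  apply: (big_ind (fun x => x < size q + m)%N) => //.
  - by rewrite addn_gt0 size_poly_gt0 nq.
  - by move=> x y hx hy; rewrite gtn_max hx hy.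
  move=> i _; rewrite mul_polyC; apply: leq_ltn_trans (size_scale_leq _ _) _.
  by have [-> _] := size_iter_xmul i nq; rewrite ltn_add2l.
rewrite /smul hp big_ord_recr /= addrC size_polyDl ?hT // lead_coefDl ?hT //.
rewrite lead_coef_Cmul // hlT /lead_coef hp /=; split => //; lia.
Qed.

Lemma smul_neq0 (p q : {poly R}) : p != 0 -> q != 0 -> sm p q != 0.
Proof.
move=> np nq; have [h _] := size_smul np nq.
by rewrite -size_poly_eq0 h; move: np nq; rewrite -!size_poly_gt0; lia.
Qed.

Lemma smul_eq0 (p q : {poly R}) : sm p q = 0 -> p = 0 \/ q = 0.
Proof.
case: (eqVneq p 0) => [|np]; first by left.
case: (eqVneq q 0) => [|nq]; first by right.
by move=> h; have := smul_neq0 np nq; rewrite h eqxx.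
Qed.

Lemma smulIf (A B P : {poly R}) : P != 0 -> sm A P = sm B P -> A = B.
Proof.
move=> nP h; have : sm (A - B) P = 0 by rewrite smulBl h subrr.
by case/smul_eq0 => /eqP; rewrite ?subr_eq0 ?(negPf nP) // => /eqP.
Qed.

Lemma leq_size_smul (p q : {poly R}) : p != 0 -> (size q <= size (sm p q))%N.
Proof.
move=> np; case: (eqVneq q 0) => [->|nq]; first by rewrite size_poly0.
by have [-> _] := size_smul np nq; move: np; rewrite -size_poly_gt0; lia.
Qed.

Lemma smul_small_eq0 (A L : {poly R}) :
  L != 0 -> (size (sm A L) < size L)%N -> A = 0.
Proof.
move=> nL hs; apply/eqP/negPn/negP => nA.
by have := leq_size_smul L nA; rewrite leqNgt hs.
Qed.

Lemma size_sub_lt (p q : {poly R}) : p != 0 -> size p = size q ->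
  lead_coef p = lead_coef q -> (size (p - q)%R < size p)%N.
Proof.
move=> np hs hl; rewrite (polySpred np) ltnS; apply/leq_sizeP => j hj; rewrite coefB.
case: (ltngtP j (size p).-1) => [|hj2|->]; first by rewrite ltnNge hj.
  by rewrite !nth_default ?subrr // -?hs (polySpred np).
by move: hl; rewrite /lead_coef -hs => ->; rewrite subrr.
Qed.

(* Right Euclidean division by a monic polynomial L: M = Q L + Rm, deg Rm < deg L.
   The leading term of M is removed by subtracting lead_coef(M) x^m L. *)
Lemma rdiv_monic (L M : {poly R}) : L \is monic ->
  exists Q Rm, M = sm Q L + Rm /\ (size Rm < size L)%N.
Proof.
move=> mL; have nL := monic_neq0 mL.
elim: {M}(size M) {-2}M (leqnn (size M)) => [|k IH] M hM.
  exists 0, M; rewrite smul0l add0r; split => //.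
  by apply: leq_ltn_trans hM _; rewrite size_poly_gt0.
case: (ltnP (size M) (size L)) => hML; first by exists 0, M; rewrite smul0l add0r.
have nM : M != 0 by rewrite -size_poly_gt0 (leq_trans _ hML) ?size_poly_gt0.
set T := (lead_coef M)%:P * 'X^(size M - size L).
have nlM : lead_coef M != 0 by rewrite lead_coef_eq0.
have hT : sm T L = (lead_coef M)%:P * iter (size M - size L) xm L.
  by rewrite smulCl smulXn.
have [hs hl] := size_iter_xmul (size M - size L) nL.
have hs2 : size (sm T L) = size M by rewrite hT size_Cmul // hs; lia.
have hl2 : lead_coef (sm T L) = lead_coef M.
  rewrite hT lead_coef_Cmul // hl (eqP mL).
  suff -> : iter (size M - size L) s 1 = 1 by rewrite mulr1.
  by elim: (_ - _)%N => //= j ->; rewrite rmorph1.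
have hlt := size_sub_lt nM (esym hs2) (esym hl2).
have [Q [Rm [h1 h2]]] := IH (M - sm T L) (leq_trans hlt hM).
by exists (Q + T), Rm; rewrite smulDl -addrAC -h1 subrK.
Qed.

Lemma rdiv_linear (M : {poly R}) (e : R) : exists Q (g : R), M = sm Q ('X - e%:P) + g%:P.
Proof.
have [Q [Rm [h1 h2]]] := rdiv_monic M (monicXsubC e).
by exists Q, Rm`_0; rewrite -size1_polyC //; rewrite size_XsubC in h2.
Qed.

Local Notation cj := (sd_conj s d).

Lemma sd_conj_refl (a : R) : cj a a.
Proof. by exists 1; rewrite ?oner_neq0 // rmorph1 sder1 invr1 mul1r mulr1 mul0r addr0. Qed.

Lemma sder_inv (b : R) : b != 0 -> d b^-1 * b = - ((s b)^-1 * d b).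
Proof.
move=> nb; have u := unit_nz nb.
have := sderM b^-1 b; rewrite mulVr // sder1 (rmorphV _ u) => /eqP.
by rewrite eq_sym addrC addr_eq0 => /eqP.
Qed.

Lemma sd_conj_sym (a b : R) : cj a b -> cj b a.
Proof.
case=> be nb hb; have u := unit_nz nb; have su := unit_nz (sigma_neq0 nb).
exists be^-1; first by rewrite invr_eq0.
rewrite invrK (rmorphV _ u) (sder_inv nb) hb mulrDr mulrDl !mulrA mulVr // mul1r.
by rewrite !mulrVK // addrK.
Qed.

Lemma sd_conj_trans (a b c : R) : cj a b -> cj b c -> cj a c.
Proof.
case=> be nb hb [ga ng hc]; have ub := unit_nz nb; have ug := unit_nz ng.
exists (ga * be); first exact: mulr_neq0_div.
by rewrite hc hb rmorphM sderM invrM // !mulrDr !mulrDl !mulrA mulrK // addrA.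
Qed.

Definition conjby (be x : R) : R := s be * x * be^-1 + d be * be^-1.

Lemma sd_conj_conjby (be x : R) : be != 0 -> cj x (conjby be x).
Proof. by move=> nb; exists be. Qed.

Lemma smul_linear (c u : R) :
  sm ('X - c%:P) ('X - u%:P) = 'X * 'X - (s u + c)%:P * 'X + (c * u - d u)%:P.
Proof.
rewrite smulBl smulC -{1}(expr1 'X) smulXn /= xmulB -{1}(expr1 'X) xmulXn.
rewrite -[u%:P]mulr1 xmulCl -(expr0 'X) xmulXn expr1 expr0 !mulr1.
rewrite expr2 mulrBr -polyCM polyCD polyCB mulrDl !opprD !opprK !addrA.
by rewrite (addrAC _ (- (d u)%:P)) (addrAC _ (- (d u)%:P)).
Qed.

Lemma linear_swap (e b : R) : b != e ->
  sm ('X - (conjby (b - e) e)%:P) ('X - b%:P) =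
  sm ('X - (conjby (b - e) b)%:P) ('X - e%:P).
Proof.
move=> nbe; have hb : b = e + (b - e) by rewrite addrC subrK.
rewrite -subr_eq0 in nbe; move: (b - e) nbe hb => be nb ->; rewrite !smul_linear.
have hbe : conjby be (e + be) = conjby be e + s be.
  by rewrite /conjby mulrDr mulrDl mulrK ?unit_nz // addrAC.
have he : conjby be e * be = s be * e + d be.
  by rewrite /conjby mulrDl !mulrVK ?unit_nz.
rewrite hbe (rmorphD s); move: he; set c := conjby be e => he; clearbody c.
rewrite [s e + s be + c]addrAC (addrA (s e)); congr (_ + _%:P).
by rewrite mulrDr he sderD opprD mulrDl !addrA (addrAC _ (d be)) addrK.
Qed.

(* The remainder of G by x - e^(b-e)
   is a constant g, and the remainder of G (x - b) by x - e is then -g (b - e). *)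
Lemma rdvd_linear_swap (G : {poly R}) (e b : R) : b != e ->
  rd ('X - e%:P) (sm G ('X - b%:P)) -> rd ('X - (conjby (b - e) e)%:P) G.
Proof.
move=> nbe [W hW]; set c := conjby (b - e) e.
have [Q [g hG]] := rdiv_linear G c.
have hX : sm G ('X - b%:P) =
    sm (sm Q ('X - (conjby (b - e) b)%:P) + g%:P) ('X - e%:P) - (g * (b - e))%:P.
  rewrite {1}hG smulDl -smulA linear_swap // smulA smulDl !smulC.
  by rewrite polyCM polyCB -addrA -!mulrBr opprB addrA subrK.
have h0 : sm (W - (sm Q ('X - (conjby (b - e) b)%:P) + g%:P)) ('X - e%:P)
          = - (g * (b - e))%:P by rewrite smulBl -hW hX addrAC subrr add0r.
have hA : W - (sm Q ('X - (conjby (b - e) b)%:P) + g%:P) = 0.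
  apply: (smul_small_eq0 (monic_neq0 (monicXsubC e))).
  by rewrite h0 size_polyN size_XsubC ltnS size_polyC_leq1.
have /eqP : (g * (b - e))%:P = 0 by apply/oppr_inj; rewrite -h0 hA smul0l oppr0.
rewrite polyC_eq0 => /eqP /mulr_eq0_div [hg|]; last by move/eqP; rewrite subr_eq0 (negPf nbe).
by exists Q; rewrite hG hg addr0.
Qed.

Inductive lin_prod (a : R) : nat -> {poly R} -> Prop :=
| lin_prod0 : lin_prod a 0 1
| lin_prodS k P e : lin_prod a k P -> cj a e -> lin_prod a k.+1 (sm P ('X - e%:P)).

Lemma lin_prodS_inv (a : R) k P : lin_prod a k.+1 P ->
  exists P1 e, [/\ lin_prod a k P1, cj a e & P = sm P1 ('X - e%:P)].
Proof. by move=> h; inversion h; exists P0, e. Qed.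

Lemma lin_prod_pass (a : R) k P : lin_prod a k P -> forall G b, ~ cj a b ->
  rd P (sm G ('X - b%:P)) -> exists2 P', lin_prod a k P' & rd P' G.
Proof.
elim=> [|{}k P1 e hP1 IH hae] G b nab [Q hQ].
  by exists 1; [exact: lin_prod0 | exists G; rewrite smul1r].
rewrite smulA in hQ.
have nbe : b != e by apply: contra_not_neq nab => ->.
have [Q2 hG] := rdvd_linear_swap nbe (ex_intro _ _ hQ).
have hc : sm Q2 ('X - (conjby (b - e) b)%:P) = sm Q P1.
  apply: (smulIf (monic_neq0 (monicXsubC e))).
  by rewrite -hQ hG -!smulA linear_swap.
have nab' : ~ cj a (conjby (b - e) b).
  move=> h; apply: nab; apply: (sd_conj_trans h); apply: sd_conj_sym.
  by apply: sd_conj_conjby; rewrite subr_eq0.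
have [P1' hP1' [W hW]] := IH Q2 _ nab' (ex_intro _ Q hc).
exists (sm P1' ('X - (conjby (b - e) e)%:P)); last by exists W; rewrite hG hW smulA.
apply: lin_prodS => //; apply: (sd_conj_trans hae).
by apply: sd_conj_conjby; rewrite subr_eq0.
Qed.

(* Peel one linear factor x - e off some P_j; every other P_i passes
   it by lin_prod_pass, so the cofactor of x - e carries all but one factor. *)
Lemma lin_prods_deg n (a : 'I_n -> R) (Ha : forall i j, i != j -> ~ cj (a i) (a j))
    (ks : 'I_n -> nat) (Ps : 'I_n -> {poly R}) (F : {poly R}) :
  F != 0 -> (forall i, lin_prod (a i) (ks i) (Ps i)) -> (forall i, rd (Ps i) F) ->
  (\sum_(i < n) ks i <= sdeg F)%N.
Proof.
move hm : (\sum_(i < n) ks i)%N => m; elim: m F Ps ks hm => [//|m IH] F Ps ks hm nF hP hD.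
have /forallPn [j] : ~~ [forall (i | true), ks i == 0%N] by rewrite -sum_nat_eq0 hm.
case hj : (ks j) => [//|k] _; move: (hP j); rewrite hj => /lin_prodS_inv [P1 [e [h1 he hPj]]].
have [Q hQ] := hD j; rewrite hPj smulA in hQ.
have nX : 'X - e%:P != 0 := monic_neq0 (monicXsubC e).
have nF1 : sm Q P1 != 0 by apply: contraNneq nF => h0; rewrite hQ h0 smul0l.
have hdeg : sdeg F = (sdeg (sm Q P1)).+1.
  have [h _] := size_smul nF1 nX; rewrite /sdeg hQ h size_XsubC.
  by move: nF1; rewrite -size_poly_gt0; lia.
set ks' := fun i => if i == j then k else ks i.
have hpass i : exists2 P', lin_prod (a i) (ks' i) P' & rd P' (sm Q P1).
  rewrite /ks'; case: eqVneq => [->|nij]; first by exists P1 => //; exists Q.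
  apply: (lin_prod_pass (hP i) (b := e)); last by rewrite -hQ; exact: hD i.
  by move=> hie; apply: (Ha i j nij); exact: sd_conj_trans hie (sd_conj_sym he).
have [Ps' hP' hD'] := fin_all_exists2 hpass.
rewrite hdeg ltnS; apply: (IH _ Ps' ks') => //.
rewrite (bigD1 j) //= {1}/ks' eqxx; move: hm; rewrite (bigD1 j) //= hj addSn => -[<-].
by congr (_ + _)%N; apply: eq_bigr => i; rewrite /ks' => /negPf ->.
Qed.

Lemma spow_lin_prod (a : R) r : lin_prod a r (spow s d ('X - a%:P) r).
Proof. by elim: r => [|r IH]; [exact: lin_prod0 | exact: lin_prodS IH (sd_conj_refl a)]. Qed.

Lemma spowSl (p : {poly R}) r : spow s d p r.+1 = sm p (spow s d p r).
Proof.
elim: r => [|r IH]; first by rewrite /spow /= smul1l smul1r.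
by rewrite [LHS]/spow iterS -/(spow s d p r.+1) {1}IH -smulA.
Qed.

Lemma ore_linear (V : {poly R}) (e : R) :
  exists c V', sm ('X - c%:P) V = sm V' ('X - e%:P).
Proof.
have [Q [g hV]] := rdiv_linear V e.
set c := (s g * e + d g) * g^-1.
have hc : c * g = s g * e + d g.
  case: (eqVneq g 0) => [->|ng]; first by rewrite mulr0 rmorph0 sder0 mul0r add0r.
  by rewrite /c mulrVK // unit_nz.
exists c, (sm ('X - c%:P) Q + (s g)%:P).
rewrite hV smulDr smulA smulDl smulC; congr (_ + _).
rewrite smulBl smulC -{1}(expr1 'X) smulXn /= -[g%:P]mulr1 xmulCl -(expr0 'X) xmulXn.
rewrite expr0 expr1 !mulr1 -polyCM hc mulrBr -polyCM polyCD opprD addrA.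
by rewrite (addrAC _ (d g)%:P) addrK.
Qed.

Lemma left_mult_spow (V : {poly R}) (e : R) (r : nat) :
  exists U : {poly R}, [/\ U != 0, (size U <= r.+1)%N & rd (spow s d ('X - e%:P) r) (sm U V)].
Proof.
elim: r => [|r [U [nU hU [W hW]]]].
  by exists 1; rewrite oner_neq0 size_poly1; split => //; exists (sm 1 V); rewrite smul1r.
have [c [W' hc]] := ore_linear W e.
have nXc : 'X - c%:P != 0 := monic_neq0 (monicXsubC c).
exists (sm ('X - c%:P) U); split; first exact: smul_neq0.
  by have [-> _] := size_smul nXc nU; rewrite size_XsubC add2n ltnS.
by exists W'; rewrite -smulA hW smulA hc -smulA -spowSl.
Qed.

Lemma common_left_multiple n (a : 'I_n -> R) (r : 'I_n -> nat) :
  exists2 M : {poly R}, M != 0 /\ (sdeg M <= \sum_(i < n) r i)%N &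
    forall i, rd (spow s d ('X - (a i)%:P) (r i)) M.
Proof.
suff [M [nM hM hD]] : exists M : {poly R}, [/\ M != 0,
    (size M <= (\sum_(i <- index_enum 'I_n) r i).+1)%N &
    forall i, i \in index_enum 'I_n -> rd (spow s d ('X - (a i)%:P) (r i)) M].
  exists M; last by move=> i; apply: hD; rewrite mem_index_enum.
  by split => //; rewrite /sdeg -ltnS prednK ?size_poly_gt0.
elim: (index_enum 'I_n) => [|i l [M [nM hM hD]]].
  by exists 1; rewrite oner_neq0 size_poly1 big_nil.
have [U [nU hU [W hW]]] := left_mult_spow M (a i) (r i).
exists (sm U M); split; first exact: smul_neq0.
  have [-> _] := size_smul nU nM; rewrite big_cons.
  by move: hU hM; rewrite -!size_poly_gt0 in nU nM; lia.
move=> j; rewrite inE => /orP [/eqP ->|hj]; first by exists W.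
by have [A ->] := hD j hj; exists (sm U A); rewrite smulA.
Qed.

(* A family with a nonzero common left multiple has a monic llcm: normalize a
   common multiple of minimal degree; if it failed to divide some common
   multiple, the remainder would be a shorter nonzero common multiple. *)
Lemma llcm_exists n (g : 'I_n -> {poly R}) (M : {poly R}) :
  M != 0 -> (forall i, rd (g i) M) -> exists L, is_monic_llcm s d g L.
Proof.
elim: {M}(size M) {-2}M (leqnn (size M)) => [|k IH] M hM nM hD.
  by move: nM; rewrite -size_poly_leq0 hM.
have nlc : lead_coef M != 0 by rewrite lead_coef_eq0.
set L := sm (lead_coef M)^-1%:P M.
have mL : L \is monic.
  by apply/monicP; rewrite /L smulC lead_coef_Cmul ?invr_eq0 // mulVr // unit_nz.
have hLD i : rd (g i) L.
  by have [A hA] := hD i; exists (sm (lead_coef M)^-1%:P A); rewrite /L hA smulA.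
case: (classic (forall M', (forall i, rd (g i) M') -> rd L M')) => [hmin|].
  by exists L.
move=> /not_all_ex_not [M' hM'].
have [hM'D hM'n] := imply_to_and _ _ hM'.
have [Q [Rm [hdiv hs]]] := rdiv_monic M' mL.
apply: (IH Rm).
- by rewrite -ltnS (leq_trans _ hM) // -(size_Cmul M (invr_neq0 nlc)) -smulC.
- by apply: contra_not_neq hM'n => h0; exists Q; rewrite hdiv h0 addr0.
move=> i; have [A hA] := hM'D i; have [B hB] := hLD i.
by exists (A - sm Q B); rewrite smulBl -hA -smulA -hB hdiv addrC addKr.
Qed.

Lemma sdeg_eq_scalar (L F : {poly R}) : L \is monic -> F != 0 -> rd L F ->
  sdeg L = sdeg F <-> exists2 c : R, c != 0 & F = sm c%:P L.
Proof.
move=> mL nF [P hP]; have nL := monic_neq0 mL.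
have nP : P != 0 by apply: contraNneq nF => h0; rewrite hP h0 smul0l.
split => [hdeg|[c nc ->]]; last by rewrite smulC /sdeg size_Cmul.
have [hs _] := size_smul nP nL.
have hsP : size P = 1%N.
  by move: hdeg; rewrite /sdeg hP hs; move: nP nL; rewrite -!size_poly_gt0; lia.
have hPc : P = (P`_0)%:P by rewrite -size1_polyC ?hsP.
exists P`_0; last by rewrite hP {1}hPc.
by apply: contraNneq nP => h0; rewrite hPc h0.
Qed.

Section PowersOfLinear.
Variables (n : nat) (a : 'I_n -> R) (r : 'I_n -> nat).
Hypothesis Ha : forall i j, i != j -> ~ cj (a i) (a j).

Lemma spows_deg (G : {poly R}) :
  G != 0 -> (forall i, rd (spow s d ('X - (a i)%:P) (r i)) G) ->
  (\sum_(i < n) r i <= sdeg G)%N.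
Proof. by move=> nG hG; apply: (lin_prods_deg Ha nG _ hG) => i; exact: spow_lin_prod. Qed.

Lemma llcm_spows_deg (L : {poly R}) :
  is_monic_llcm s d (fun i => spow s d ('X - (a i)%:P) (r i)) L ->
  sdeg L = (\sum_(i < n) r i)%N.
Proof.
move=> [mL [hLD hLmin]].
have [M [nM hM] hMD] := common_left_multiple a r.
have [Q hQ] := hLmin M hMD.
have nQ : Q != 0 by apply: contraNneq nM => h0; rewrite hQ h0 smul0l.
have hLM : (sdeg L <= sdeg M)%N by rewrite /sdeg hQ -!subn1 leq_sub2r // leq_size_smul.
by apply/eqP; rewrite eqn_leq (leq_trans hLM hM) (spows_deg (monic_neq0 mL) hLD).
Qed.
End PowersOfLinear.
End SkewPolynomials.

Unset Implicit Arguments.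
Theorem mainTheorem8 (R : unitRingType) (HR : is_division_ring R)
  (s : {rmorphism R -> R}) (d : R -> R) (Hd : is_sigma_derivation s d)
  (n : nat) (a : 'I_n -> R) (r : 'I_n -> nat)
  (Ha : forall i j : 'I_n, i != j -> ~ sd_conj s d (a i) (a j))
  (Hr : forall i, (0 < r i)%N)
  (F : {poly R}) (HF : F != 0)
  (Hdiv : forall i, rdvd s d (spow s d ('X - (a i)%:P) (r i)) F) :
  (\sum_(i < n) r i <= sdeg F)%N /\
  (exists L, is_monic_llcm s d (fun i => spow s d ('X - (a i)%:P) (r i)) L) /\
  (forall L, is_monic_llcm s d (fun i => spow s d ('X - (a i)%:P) (r i)) L ->
     ((\sum_(i < n) r i)%N = sdeg F <->
      exists2 c : R, c != 0 & F = smul s d c%:P L)).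
Proof.
split; first exact: (spows_deg HR Hd Ha HF Hdiv).
split; first exact: (llcm_exists HR Hd HF Hdiv).
move=> L hL; have [mL [_ hLmin]] := hL.
rewrite -(llcm_spows_deg HR Hd Ha hL).
exact: (sdeg_eq_scalar HR Hd mL HF (hLmin F Hdiv)).
Qed.
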